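(* There exist numerical constants $c,c'>0$ and $\varepsilon_0>0$ such that for every $\varepsilon\in(0,\varepsilon_0)$ there exists a model class $\mathcal M$ with $$\sup_{\bar M\in\mathrm{co}(\mathcal M)}\mathrm{dec}^{\mathrm c}_{\mathrm r,\varepsilon}(\mathcal M,\bar M)\le c\cdot\varepsilon,$$ yet $$\mathrm{dec}^{\mathrm c}_{\mathrm r,\varepsilon}(\mathcal M)=\sup_{\bar M\in\mathrm{co}(\mathcal M)}\mathrm{dec}^{\mathrm c}_{\mathrm r,\varepsilon}(\mathcal M\cup\{\bar M\},\bar M)\ge c'\cdot\varepsilon^{2/3}.$$
   Context: Models are kernels $M:\Pi\to\Delta([0,1]\times\mathcal O)$ for a decision space $\Pi$ and observation space $\mathcal O$ (rewards in $[0,1]$). $f^M(\pi)=\mathbb E_{(r,o)\sim M(\pi)}[r]$, $\pi_M\in\arg\max f^M$, $g^M(\pi)=f^M(\pi_M)-f^M(\pi)$; $D^2_H$ is squared Hellinger distance; $\mathrm{co}(\mathcal M)$ is the set of mixtures $\pi\mapsto\mathbb E_{M\sim\nu}[M(\pi)]$, $\nu\in\Delta(\mathcal M)$. Constrained regret DEC: $\mathrm{dec}^{\mathrm c}_{\mathrm r,\varepsilon}(\mathcal M',\bar M)=\inf_{p\in\Delta(\Pi)}\sup_{M\in\mathcal M'}\{\mathbb E_{\pi\sim p}[g^M(\pi)]:\mathbb E_{\pi\sim p}[D^2_H(M(\pi),\bar M(\pi))]\le\varepsilon^2\}$ (value $0$ if empty). *)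

From HB Require Import structures.
From mathcomp Require Import all_boot all_order all_algebra.
From mathcomp Require Import classical_sets boolp reals exp.
Set Implicit Arguments. Unset Strict Implicit. Unset Printing Implicit Defensive.
Import Order.TTheory GRing.Theory Num.Theory.
Local Open Scope ring_scope.
Local Open Scope classical_set_scope.

Section Defs.
Variables (R : realType) (Pi : finType) (O : eqType).

(* A finitely supported distribution on [0,1] x O, given as a list of
   (weight, (reward, observation)) atoms. *)
Definition dist := seq (R * (R * O)).

Definition mass (d : dist) (z : R * O) : R := \sum_(w <- d | w.2 == z) w.1.

Definition valid_dist (d : dist) : Prop :=
  (forall w, w \in d -> 0 <= w.1 /\ 0 <= w.2.1 <= 1) /\ \sum_(w <- d) w.1 = 1.

Definition hell2 (d1 d2 : dist) : R :=
  \sum_(z <- undup (map snd (d1 ++ d2))) (Num.sqrt (mass d1 z) - Num.sqrt (mass d2 z)) ^+ 2.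

Definition mean_reward (d : dist) : R := \sum_(w <- d) w.1 * w.2.1.

Definition model := Pi -> dist.

Definition valid_model (M : model) : Prop := forall pi, valid_dist (M pi).

Definition fM (M : model) (pi : Pi) : R := mean_reward (M pi).

(* f^M(pi_M) = max_pi f^M(pi) (f^M >= 0 for valid models, so 0 is a harmless seed) *)
Definition fstar (M : model) : R := \big[Num.max/0]_(pi : Pi) fM M pi.

Definition gM (M : model) (pi : Pi) : R := fstar M - fM M pi.

Definition is_pdist (p : {ffun Pi -> R}) : Prop :=
  (forall pi, 0 <= p pi) /\ \sum_pi p pi = 1.

Definition Ep (p : {ffun Pi -> R}) (h : Pi -> R) : R := \sum_pi p pi * h pi.

Definition valid_class (Ms : seq model) : Prop :=
  forall i : 'I_(size Ms), valid_model (nth (fun _ => [::]) Ms i).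

(* mixture pi |-> E_{M ~ nu}[M(pi)] with nu given by weights on the list *)
Definition mixture (Ms : seq model) (nu : 'I_(size Ms) -> R) : model :=
  fun pi => flatten [seq [seq (nu i * x.1, x.2) | x <- nth (fun _ => [::]) Ms i pi]
                    | i <- enum 'I_(size Ms)].

Definition co (Ms : seq model) : set model :=
  [set Mbar | exists nu : 'I_(size Ms) -> R,
     (forall i, 0 <= nu i) /\ \sum_i nu i = 1 /\ Mbar = mixture nu].

(* inner value: sup over feasible M in M' of E_p[g^M] (0 if none feasible) *)
Definition dec_inner (Ms' : seq model) (Mbar : model) (eps : R)
  (p : {ffun Pi -> R}) : R :=
  \big[Num.max/0]_(M <- Ms' | Ep p (fun pi => hell2 (M pi) (Mbar pi)) <= eps ^+ 2)
     Ep p (gM M).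

Definition dec_c (Ms' : seq model) (Mbar : model) (eps : R) : R :=
  inf [set v | exists p, is_pdist p /\ v = dec_inner Ms' Mbar eps p].

Definition dec_c_co (Ms : seq model) (eps : R) : R :=
  sup [set v | exists Mbar, co Ms Mbar /\ v = dec_c Ms Mbar eps].

Definition dec_c_class (Ms : seq model) (eps : R) : R :=
  sup [set v | exists Mbar, co Ms Mbar /\ v = dec_c (Mbar :: Ms) Mbar eps].

End Defs.

(* The class consists of N ~ 1/(2 eps^2) deterministic "needles" on the
   decisions None, a safe decision paying 1/2, and Some j for j < N: needle k
   pays 1 at Some k and 0 at the other arms.  Against a mixture Mbar of needles
   the learner loses nothing.  If some needle k has weight > eps^2 in Mbar,
   playing Some k makes every other needle infeasible and needle k has no regret
   there; otherwise uniform play over the arms makes every needle infeasible,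
   since Mbar puts little mass on its winning arm.  Once the uniform mixture
   Mbar joins the class, it is always feasible and regrets about 1/2 on every
   arm, while the least played needle stays feasible and regrets 1/2 on None.
   Hence the DEC of the class is at least 1/64: a constant gap, which in
   particular dominates eps^(2/3)/64. *)

From HB Require Import structures.
From mathcomp Require Import all_boot all_order all_algebra.
From mathcomp Require Import classical_sets boolp reals exp.
From mathcomp Require Import ring lra.
Set Implicit Arguments. Unset Strict Implicit. Unset Printing Implicit Defensive.
Import Order.TTheory GRing.Theory Num.Theory.
Local Open Scope ring_scope.

Lemma mem_In (T : eqType) (x : T) (s : seq T) : x \in s -> List.In x s.
Proof. by elim: s => //= y s IH; rewrite inE => /orP[/eqP ->|/IH]; [left|right]. Qed.

(* Model classes are lists of functions, which have no decidable equality, so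
   membership is [List.In]. *)
Section BigMax0.
Variable R : realType.

Lemma bigmax0_ge0 (T : Type) (r : seq T) (P : pred T) (F : T -> R) :
  0 <= \big[Num.max/0]_(x <- r | P x) F x.
Proof.
elim: r => [|x r IH]; rewrite ?big_nil ?big_cons //.
by case: ifP => _ //; rewrite le_max IH orbT.
Qed.

Lemma le_bigmax0 (T : Type) (r : seq T) (P : pred T) (F : T -> R) x :
  List.In x r -> P x -> F x <= \big[Num.max/0]_(y <- r | P y) F y.
Proof.
elim: r => [|y r IH] //= xr Px; rewrite big_cons.
case: xr Px => [<-|xr] Px; first by rewrite Px le_max lexx.
by case: ifP => _; [rewrite le_max IH ?orbT | exact: IH].
Qed.

Lemma bigmax0_le (T : Type) (r : seq T) (P : pred T) (F : T -> R) c :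
  0 <= c -> (forall x, List.In x r -> P x -> F x <= c) ->
  \big[Num.max/0]_(y <- r | P y) F y <= c.
Proof.
move=> c0; elim: r => [|y r IH] Fc; rewrite ?big_nil ?big_cons //.
have IHr : \big[Num.max/0]_(y <- r | P y) F y <= c.
  by apply: IH => x xr; apply: Fc; right.
by case: ifP => Py //; rewrite ge_max IHr andbT; apply: Fc => //; left.
Qed.

End BigMax0.

Lemma big_option (T : finType) (K : Type) (op : K -> K -> K) (idx : K) (F : option T -> K) :
  \big[op/idx]_(x : option T) F x = op (F None) (\big[op/idx]_(i : T) F (Some i)).
Proof.
have -> : index_enum (option T) = None :: map Some (index_enum T).
  by rewrite /index_enum !unlock /= /option_enum !unlock.
by rewrite big_cons big_map.
Qed.

Section Hellinger.
Variables (R : realType) (O : eqType).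
Implicit Types (d : dist R O) (z : R * O).

Lemma mass_dirac z0 z : mass [:: (1, z0)] z = (z0 == z)%:R.
Proof. by rewrite /mass big_cons big_nil /=; case: eqP => _; rewrite ?addr0 ?add0r. Qed.

Lemma hell2xx d : hell2 d d = 0.
Proof. by rewrite /hell2 big1 // => z _; rewrite subrr expr0n. Qed.

Lemma hell2_ge0 d1 d2 : 0 <= hell2 d1 d2.
Proof. by rewrite /hell2; apply: sumr_ge0 => z _; exact: sqr_ge0. Qed.

Variable d : dist R O.
Hypothesis d_ge0 : forall w, w \in d -> 0 <= w.1.
Hypothesis d_sum1 : \sum_(w <- d) w.1 = 1.

Lemma mass_ge0 z : 0 <= mass d z.
Proof. by rewrite /mass big_seq_cond; apply: sumr_ge0 => w /andP[/d_ge0]. Qed.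

Lemma mass_le1 z : mass d z <= 1.
Proof.
rewrite -d_sum1 /mass big_mkcond /= big_seq [leRHS]big_seq.
by apply: ler_sum => w wd; case: ifP => _; rewrite ?d_ge0.
Qed.

Lemma sum_mass (s : seq (R * O)) : uniq s -> {subset map snd d <= s} ->
  \sum_(z <- s) mass d z = 1.
Proof.
move=> us sub; rewrite -d_sum1 /mass.
under eq_bigr do rewrite big_mkcond.
rewrite exchange_big /=; apply: eq_big_seq => w wd.
rewrite -big_mkcond -big_filter.
have -> : [seq i <- s | w.2 == i] = [:: w.2].
  rewrite -(filter_pred1_uniq us (sub _ (map_f snd wd))).
  by apply: eq_filter => i; rewrite /= eq_sym.
by rewrite big_seq1.
Qed.

Lemma hell2_dirac z : hell2 [:: (1, z)] d = 2 - 2 * Num.sqrt (mass d z).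
Proof.
rewrite /hell2; set s := undup _.
have zs : z \in s by rewrite mem_undup map_cat mem_cat mem_head.
have sub : {subset map snd d <= s} by move=> x xd; rewrite mem_undup map_cat mem_cat xd orbT.
have := @sum_mass s (undup_uniq _) sub; rewrite -/s (bigD1_seq z) ?undup_uniq //= => sum1.
rewrite (bigD1_seq z) ?undup_uniq //= mass_dirac eqxx sqrtr1.
rewrite (eq_bigr (mass d)); last first.
  move=> x zx; rewrite mass_dirac eq_sym (negbTE zx) sqrtr0 sub0r sqrrN.
  exact/sqr_sqrtr/mass_ge0.
have sq := sqr_sqrtr (mass_ge0 z).
have -> : \sum_(x <- s | x != z) mass d x = 1 - mass d z.
  by rewrite -sum1; ring.
by move: sq; set t := Num.sqrt _ => <-; ring.
Qed.

Lemma hell2_dirac_ge z : 1 - mass d z <= hell2 [:: (1, z)] d.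
Proof.
rewrite hell2_dirac; have := mass_ge0 z; have := mass_le1 z.
have := sqr_sqrtr (mass_ge0 z); have := sqrtr_ge0 (mass d z).
set t := Num.sqrt _; nra.
Qed.

Lemma hell2_dirac_le z : hell2 [:: (1, z)] d <= 2 * (1 - mass d z).
Proof.
rewrite hell2_dirac; have := mass_ge0 z; have := mass_le1 z.
have := sqr_sqrtr (mass_ge0 z); have := sqrtr_ge0 (mass d z).
set t := Num.sqrt _; nra.
Qed.

End Hellinger.

Section Models.
Variables (R : realType) (Pi : finType) (O : eqType).
Implicit Types (M : model R Pi O) (Ms : seq (model R Pi O)) (p : {ffun Pi -> R}).

Lemma valid_class_In Ms M : valid_class Ms -> List.In M Ms -> valid_model M.
Proof.
elim: Ms => [|M0 Ms IH] vMs //= [<-|MMs]; first exact: (vMs ord0).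
by apply: IH => // i; exact: (vMs (lift ord0 i)).
Qed.

Lemma mean_reward_ge0 (d : dist R O) : valid_dist d -> 0 <= mean_reward d.
Proof.
move=> [d01 _]; rewrite /mean_reward big_seq; apply: sumr_ge0 => w /d01 [w0 /andP[r0 _]].
exact: mulr_ge0.
Qed.

Lemma mean_reward_le1 (d : dist R O) : valid_dist d -> mean_reward d <= 1.
Proof.
move=> [d01 d1]; rewrite -d1 /mean_reward !big_seq; apply: ler_sum => w /d01 [w0 /andP[_ r1]].
by rewrite ler_piMr.
Qed.

Lemma le_fstar M pi : fM M pi <= fstar M.
Proof. by apply: le_bigmax0 => //; exact/mem_In/mem_index_enum. Qed.

Lemma gM_ge0 M pi : 0 <= gM M pi.
Proof. by rewrite subr_ge0 le_fstar. Qed.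

Lemma gM_le1 M pi : valid_model M -> gM M pi <= 1.
Proof.
move=> vM; have fM0 := mean_reward_ge0 (vM pi).
suff : fstar M <= 1 by rewrite /gM /fM; lra.
by apply: bigmax0_le => // pi' _ _; exact: mean_reward_le1.
Qed.

Lemma Ep_le1 p (h : Pi -> R) : is_pdist p -> (forall pi, h pi <= 1) -> Ep p h <= 1.
Proof.
move=> [p0 p1] h1; rewrite -p1 /Ep; apply: ler_sum => pi _.
by rewrite ler_piMr.
Qed.

Definition point_pdist (a : Pi) : {ffun Pi -> R} := [ffun pi => (pi == a)%:R].

Lemma Ep_point a h : Ep (point_pdist a) h = h a.
Proof.
rewrite /Ep (bigD1 a) //= ffunE eqxx mul1r big1 ?addr0 // => pi /negbTE pia.
by rewrite ffunE pia mul0r.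
Qed.

Lemma point_pdist_pdist a : is_pdist (point_pdist a).
Proof.
split; first by move=> pi; rewrite ffunE ler0n.
by have := Ep_point a (fun _ => 1); rewrite /Ep; under eq_bigr do rewrite mulr1.
Qed.

Section Mixture.
Variables (Ms : seq (model R Pi O)) (nu : 'I_(size Ms) -> R).

Lemma sum_mixture (F : R * (R * O) -> R) pi :
  \sum_(w <- mixture nu pi) F w =
  \sum_(i < size Ms) \sum_(x <- nth (fun _ => [::]) Ms i pi) F (nu i * x.1, x.2).
Proof. by rewrite big_flatten /= big_map big_enum; apply: eq_big => // i _; rewrite big_map. Qed.

Lemma mixture_mass pi z :
  mass (mixture nu pi) z = \sum_(i < size Ms) nu i * mass (nth (fun _ => [::]) Ms i pi) z.
Proof.
rewrite /mass big_mkcond sum_mixture; apply: eq_big => // i _.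
rewrite mulr_sumr [RHS]big_mkcond; apply: eq_bigr => x _ /=.
by case: ifP; rewrite ?mulr0.
Qed.

Lemma mixture_mean pi :
  mean_reward (mixture nu pi) = \sum_(i < size Ms) nu i * mean_reward (nth (fun _ => [::]) Ms i pi).
Proof.
rewrite /mean_reward sum_mixture; apply: eq_bigr => i _.
by rewrite mulr_sumr; apply: eq_bigr => x _ /=; rewrite mulrA.
Qed.

Hypotheses (vMs : valid_class Ms) (nu_ge0 : forall i, 0 <= nu i) (nu_sum1 : \sum_i nu i = 1).

Lemma mixture_valid : valid_model (mixture nu).
Proof.
move=> pi; split.
  move=> w /flattenP [s /mapP [i _ ->] /mapP [x xin ->]] /=.
  by have [/(_ _ xin) [x0 ->]] := vMs i pi; rewrite mulr_ge0.
rewrite sum_mixture -nu_sum1; apply: eq_bigr => i _.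
by have [_ s1] := vMs i pi; rewrite -mulr_sumr s1 mulr1.
Qed.

End Mixture.

Lemma co_valid Ms Mbar : valid_class Ms -> co Ms Mbar -> valid_model Mbar.
Proof. by move=> vMs [nu [nu0 [nu1 ->]]]; exact: mixture_valid. Qed.

Implicit Types (Ns : seq (model R Pi O)) (Mbar : model R Pi O) (eps : R).

Lemma le_dec_inner {Ns Mbar eps} p M : List.In M Ns ->
  Ep p (fun pi => hell2 (M pi) (Mbar pi)) <= eps ^+ 2 ->
  Ep p (gM M) <= dec_inner Ns Mbar eps p.
Proof. exact: le_bigmax0. Qed.

Lemma dec_inner_le {Ns Mbar eps} p c : 0 <= c ->
  (forall M, List.In M Ns -> Ep p (fun pi => hell2 (M pi) (Mbar pi)) <= eps ^+ 2 ->
     Ep p (gM M) <= c) ->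
  dec_inner Ns Mbar eps p <= c.
Proof. exact: bigmax0_le. Qed.

Lemma dec_c_le {Ns Mbar eps} p : is_pdist p -> dec_c Ns Mbar eps <= dec_inner Ns Mbar eps p.
Proof.
move=> pp; apply: ge_inf; last by exists p.
by exists 0 => v [q [_ ->]]; exact: bigmax0_ge0.
Qed.

Lemma dec_c_ge {Ns Mbar eps} c p0 : is_pdist p0 ->
  (forall p, is_pdist p -> c <= dec_inner Ns Mbar eps p) -> c <= dec_c Ns Mbar eps.
Proof.
move=> pp H; apply: lb_le_inf; first by exists (dec_inner Ns Mbar eps p0), p0.
by move=> v [q [qp ->]]; exact: H.
Qed.

(* [a] only witnesses that [Pi] is nonempty. *)
Lemma dec_c_le1 {Ns Mbar eps} (a : Pi) : (forall M, List.In M Ns -> valid_model M) ->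
  dec_c Ns Mbar eps <= 1.
Proof.
move=> vNs; apply: le_trans (dec_c_le (point_pdist_pdist a)) _.
apply: dec_inner_le => // M MNs _.
by apply: Ep_le1 => [|pi]; [exact: point_pdist_pdist | exact: gM_le1 (vNs M MNs)].
Qed.

End Models.

Section Needles.
Variables (R : realType) (N : nat).
Implicit Types (p : {ffun option 'I_N -> R}) (k : nat) (j : 'I_N).

Definition needle k : model R (option 'I_N) unit := fun pi =>
  if pi is Some j then [:: (1, ((k == val j)%:R, tt))] else [:: (1, (2^-1, tt))].

Definition needles : seq (model R (option 'I_N) unit) := mkseq needle N.

Lemma size_needles : size needles = N.
Proof. exact: size_mkseq. Qed.

Lemma nth_needles (i : 'I_(size needles)) : nth (fun _ => [::]) needles i = needle i.
Proof. by rewrite nth_mkseq // (leq_trans (ltn_ord i)) ?size_needles. Qed.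

Lemma In_needles M : List.In M needles <-> exists j, M = needle j.
Proof.
split => [/List.in_map_iff [k [<- /List.in_seq [_ kN]]] | [j ->]].
  by have /ssrnat.ltP kN' := kN; exists (Ordinal kN').
by apply/List.in_map/mem_In; rewrite mem_iota add0n ltn_ord.
Qed.

Lemma valid_needles : valid_class needles.
Proof.
move=> i pi; rewrite nth_needles /needle.
split => [w|]; last by case: pi => [j|] /=; rewrite big_seq1.
case: pi => [j|] /=; rewrite inE => /eqP -> /=; split => //.
  by case: (_ == _); rewrite /= ?lexx ?ler01.
by rewrite invr_ge0 ler0n invf_le1 ?ler1n.
Qed.

Lemma mean_reward_dirac (r : R) : mean_reward [:: (1, (r, tt))] = r.
Proof. by rewrite /mean_reward big_seq1 mul1r. Qed.

Lemma fM_needle_None k : fM (needle k) None = 2^-1.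
Proof. exact: mean_reward_dirac. Qed.

Lemma fM_needle_Some k j : fM (needle k) (Some j) = (k == val j)%:R.
Proof. exact: mean_reward_dirac. Qed.

Lemma fstar_needle j : fstar (needle j) = 1.
Proof.
apply/le_anti/andP; split.
  apply: bigmax0_le => // -[j'|] _ _; rewrite ?fM_needle_Some ?fM_needle_None.
    by case: (_ == _); rewrite /= ?lexx ?ler01.
  by rewrite invf_le1 ?ler1n.
by have := le_fstar (needle j) (Some j); rewrite fM_needle_Some eqxx.
Qed.

Lemma Ep_option p (h : option 'I_N -> R) :
  Ep p h = p None * h None + \sum_j p (Some j) * h (Some j).
Proof. by rewrite /Ep big_option. Qed.

Definition arm_uniform : {ffun option 'I_N -> R} :=
  [ffun pi => if pi is Some _ then N%:R^-1 else 0].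

Lemma Ep_arm_uniform h : Ep arm_uniform h = N%:R^-1 * \sum_j h (Some j).
Proof. by rewrite Ep_option ffunE mul0r add0r mulr_sumr; under eq_bigr do rewrite ffunE. Qed.

Lemma arm_uniform_pdist : (0 < N)%N -> is_pdist arm_uniform.
Proof.
move=> N0; split; first by case=> [j|]; rewrite ffunE ?invr_ge0 ?ler0n.
have := Ep_arm_uniform (fun _ => 1); rewrite /Ep; under eq_bigr do rewrite mulr1.
by move=> ->; rewrite sumr_const card_ord -mulr_natr mul1r mulVf // pnatr_eq0 -lt0n.
Qed.

Section NeedleMixture.
Variable nu : 'I_(size needles) -> R.
Hypotheses (nu_ge0 : forall i, 0 <= nu i) (nu_sum1 : \sum_i nu i = 1).

Definition arm_weight j := nu (cast_ord (esym size_needles) j).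

Lemma mixture_needles_Some (b : bool) j :
  mass (mixture nu (Some j)) (b%:R, tt) = if b then arm_weight j else 1 - arm_weight j.
Proof.
set j' := cast_ord (esym size_needles) j.
have := nu_sum1; rewrite (bigD1 j') //= => sum1.
have needle_mass (i : 'I_(size needles)) :
    mass (nth (fun _ => [::]) needles i (Some j)) (b%:R, tt) = ((val i == val j) == b)%:R.
  rewrite nth_needles /needle mass_dirac xpair_eqE eqxx andbT eqr_nat.
  by case: b; case: (nat_of_ord i == val j).
rewrite mixture_mass (bigD1 j') // needle_mass eqxx.
under eq_bigr => i ij.
  rewrite needle_mass.
  have -> : (val i == val j) = false.
    by apply/negbTE; apply: contra ij => /eqP ij; apply/eqP/val_inj.
  over.
rewrite /arm_weight -/j'; clear needle_mass; case: b => /=.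
  by rewrite mulr1 big1 ?addr0 // => i _; rewrite mulr0.
rewrite mulr0 add0r; under eq_bigr do rewrite mulr1n mulr1.
by rewrite -sum1 addrC addrK.
Qed.

Lemma mixture_needles_None : mass (mixture nu None) (2^-1, tt) = 1.
Proof.
rewrite mixture_mass -[in RHS]nu_sum1; apply: eq_bigr => i _.
by rewrite nth_needles /needle mass_dirac eqxx mulr1.
Qed.

Lemma fM_mixture_needles_Some j : fM (mixture nu) (Some j) = arm_weight j.
Proof.
rewrite /fM mixture_mean -(mixture_needles_Some true) mixture_mass.
apply: eq_bigr => i _; rewrite nth_needles mean_reward_dirac mass_dirac xpair_eqE andbT.
by rewrite eqr_nat; case: (nat_of_ord i == val j).
Qed.

Lemma fM_mixture_needles_None : fM (mixture nu) None = 2^-1.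
Proof.
rewrite /fM mixture_mean; under eq_bigr do rewrite nth_needles mean_reward_dirac.
by rewrite -mulr_suml nu_sum1 mul1r.
Qed.

Let mixture_weights pi := mixture_valid valid_needles nu_ge0 nu_sum1 pi.

Let mixture_mass_ge0 pi w : w \in mixture nu pi -> 0 <= w.1.
Proof. by case: (mixture_weights pi) => d01 _ /d01 []. Qed.

Let mixture_mass_sum1 pi : \sum_(w <- mixture nu pi) w.1 = 1.
Proof. by case: (mixture_weights pi). Qed.

Let needle_miss (k j : 'I_N) : k != j -> (k == val j :> nat) = false.
Proof. by move=> kj; apply/negbTE; apply: contra kj => /eqP/val_inj ->. Qed.

Lemma hell2_needle_hit_ge j :
  1 - arm_weight j <= hell2 (needle j (Some j)) (mixture nu (Some j)).
Proof.
have := hell2_dirac_ge (mixture_mass_ge0 (pi := Some j)) (mixture_mass_sum1 _) (true%:R, tt).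
by rewrite mixture_needles_Some /needle eqxx.
Qed.

Lemma hell2_needle_hit_le j :
  hell2 (needle j (Some j)) (mixture nu (Some j)) <= 2 * (1 - arm_weight j).
Proof.
have := hell2_dirac_le (mixture_mass_ge0 (pi := Some j)) (mixture_mass_sum1 _) (true%:R, tt).
by rewrite mixture_needles_Some /needle eqxx.
Qed.

Lemma hell2_needle_miss_ge (k j : 'I_N) : k != j ->
  arm_weight j <= hell2 (needle k (Some j)) (mixture nu (Some j)).
Proof.
have := hell2_dirac_ge (mixture_mass_ge0 (pi := Some j)) (mixture_mass_sum1 _) (false%:R, tt).
by rewrite mixture_needles_Some opprB addrC subrK /needle => + /needle_miss ->.
Qed.

Lemma hell2_needle_miss_le (k j : 'I_N) : k != j ->
  hell2 (needle k (Some j)) (mixture nu (Some j)) <= 2 * arm_weight j.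
Proof.
have := hell2_dirac_le (mixture_mass_ge0 (pi := Some j)) (mixture_mass_sum1 _) (false%:R, tt).
by rewrite mixture_needles_Some opprB addrC subrK /needle => + /needle_miss ->.
Qed.

Lemma hell2_needle_None k : hell2 (needle k None) (mixture nu None) = 0.
Proof.
apply/le_anti; rewrite hell2_ge0 andbT.
have := hell2_dirac_le (mixture_mass_ge0 (pi := None)) (mixture_mass_sum1 _) (2^-1, tt).
by rewrite mixture_needles_None subrr mulr0.
Qed.

End NeedleMixture.
End Needles.

Section UniformMixture.
Variables (R : realType) (N : nat).
Hypothesis N_gt0 : (0 < N)%N.

Definition uniform_weights : 'I_(size (needles R N)) -> R := fun _ => N%:R^-1.

Definition uniform_mixture : model R (option 'I_N) unit := mixture uniform_weights.

Lemma uniform_weights_ge0 i : 0 <= uniform_weights i.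
Proof. by rewrite invr_ge0 ler0n. Qed.

Lemma uniform_weights_sum1 : \sum_i uniform_weights i = 1.
Proof.
by rewrite sumr_const card_ord size_needles -(mulr_natr N%:R^-1) mulVf // pnatr_eq0 -lt0n.
Qed.

Lemma co_uniform_mixture : co (needles R N) uniform_mixture.
Proof.
exists uniform_weights; split; first exact: uniform_weights_ge0.
by split; first exact: uniform_weights_sum1.
Qed.

End UniformMixture.

Arguments uniform_mixture : clear implicits.

Section UpperBound.
Variables (R : realType) (N : nat) (eps : R).
Hypotheses (N_ge4 : (4 <= N)%N) (Neps_le : N%:R * eps ^+ 2 <= 2^-1).

Section FixedMixture.
Variable nu : 'I_(size (needles R N)) -> R.
Hypotheses (nu_ge0 : forall i, 0 <= nu i) (nu_sum1 : \sum_i nu i = 1).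

Lemma dec_c_needles_heavy_arm j : eps ^+ 2 < arm_weight nu j ->
  dec_c (needles R N) (mixture nu) eps <= 0.
Proof.
move=> heavy; apply: le_trans (dec_c_le (point_pdist_pdist R (Some j))) _.
apply: dec_inner_le => // M /In_needles [k ->]; rewrite !Ep_point.
have [<-|kj] := eqVneq k j; first by rewrite /gM fstar_needle fM_needle_Some eqxx subrr.
move/(le_trans (hell2_needle_miss_ge nu_ge0 nu_sum1 kj)) => /(lt_le_trans heavy).
by rewrite ltxx.
Qed.

Lemma dec_c_needles_light_arms : (forall j, arm_weight nu j <= eps ^+ 2) ->
  dec_c (needles R N) (mixture nu) eps <= 0.
Proof.
move=> light; have N_gt0 : (0 < N)%N by apply: leq_trans N_ge4.
apply: le_trans (dec_c_le (arm_uniform_pdist R N_gt0)) _.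
apply: dec_inner_le => // M /In_needles [k ->].
rewrite Ep_arm_uniform; set S := \sum_j _ => feasible.
have hk := hell2_needle_hit_ge nu_ge0 nu_sum1 k.
have hsum : hell2 (needle R k (Some k)) (mixture nu (Some k)) <= S.
  by rewrite /S (bigD1 k) //= lerDl; apply: sumr_ge0 => j _; exact: hell2_ge0.
have n4 : 4 <= N%:R :> R by rewrite (ler_nat _ 4).
have nV : N%:R * N%:R^-1 = 1 :> R by rewrite mulfV // pnatr_eq0 -lt0n.
have := ler_wpM2l (ler0n R N) feasible; rewrite mulrA nV mul1r => S_le.
have := light k; have := sqr_ge0 eps; move: Neps_le; nra.
Qed.

Lemma dec_c_needles_le0 : dec_c (needles R N) (mixture nu) eps <= 0.
Proof.
have [[j heavy]|] := pselect (exists j, eps ^+ 2 < arm_weight nu j).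
  exact: dec_c_needles_heavy_arm heavy.
move=> no_heavy; apply: dec_c_needles_light_arms => j.
by rewrite leNgt; apply/negP => heavy; apply: no_heavy; exists j.
Qed.

End FixedMixture.

Lemma dec_c_co_needles_le0 : dec_c_co (needles R N) eps <= 0.
Proof.
have N_gt0 : (0 < N)%N by apply: leq_trans N_ge4.
apply: ge_sup => [|v [Mbar [[nu [nu_ge0 [nu_sum1 ->]]] ->]]].
  by exists (dec_c (needles R N) (uniform_mixture R N) eps), (uniform_mixture R N);
    split => //; exact: co_uniform_mixture.
exact: dec_c_needles_le0.
Qed.

End UpperBound.

Section LowerBound.
Variables (R : realType) (N : nat) (eps : R).
Hypotheses (N_ge4 : (4 <= N)%N) (Neps_ge : 4^-1 <= N%:R * eps ^+ 2).
Implicit Types (p : {ffun option 'I_N -> R}) (k : 'I_N).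

Let N_gt0 : (0 < N)%N. Proof. exact: leq_trans N_ge4. Qed.
Let Mbar := uniform_mixture R N.
Let nu_ge0 := @uniform_weights_ge0 R N.
Let nu_sum1 := uniform_weights_sum1 R N_gt0.

Lemma Ep_gM_uniform_mixture p : is_pdist p ->
  (\sum_j p (Some j)) / 4 <= Ep p (gM Mbar).
Proof.
move=> [p_ge0 _].
have gM_arm j : 4^-1 <= gM Mbar (Some j).
  have := le_fstar Mbar None; rewrite /gM fM_mixture_needles_None //.
  rewrite fM_mixture_needles_Some //= /arm_weight /uniform_weights.
  have : N%:R^-1 <= 4^-1 :> R by rewrite lef_pV2 ?posrE ?ltr0n // (ler_nat _ 4).
  lra.
rewrite Ep_option mulr_suml.
apply: (@le_trans _ _ (\sum_j p (Some j) * gM Mbar (Some j))).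
  by apply: ler_sum => j _; rewrite ler_wpM2l.
by rewrite lerDr mulr_ge0 ?gM_ge0.
Qed.

Lemma Ep_gM_needle_ge p k : is_pdist p -> p None / 2 <= Ep p (gM (needle R k)).
Proof.
move=> [p_ge0 _]; rewrite Ep_option.
have -> : gM (needle R k) (None : option 'I_N) = 2^-1.
  by rewrite /gM fstar_needle fM_needle_None; field.
by rewrite lerDl sumr_ge0 // => j _; rewrite mulr_ge0 ?gM_ge0.
Qed.

Lemma Ep_hell2_needle_le p k : is_pdist p ->
  Ep p (fun pi => hell2 (needle R k pi) (Mbar pi)) <=
  2 * N%:R^-1 * \sum_j p (Some j) + 2 * p (Some k).
Proof.
move=> [p_ge0 _]; rewrite Ep_option (hell2_needle_None nu_ge0 nu_sum1) mulr0 add0r.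
have t_ge0 : 0 <= 2 * N%:R^-1 :> R by rewrite mulr_ge0 ?invr_ge0.
rewrite (bigD1 k) //= addrC lerD //.
  apply: (@le_trans _ _ (\sum_(j | j != k) p (Some j) * (2 * N%:R^-1))).
    apply: ler_sum => j jk; rewrite ler_wpM2l //.
    by apply: (hell2_needle_miss_le nu_ge0 nu_sum1); rewrite eq_sym.
  rewrite -mulr_suml mulrC ler_wpM2l // [leRHS](bigD1 k) //= lerDr.
  exact: p_ge0.
rewrite mulrC ler_wpM2r //; apply: le_trans (hell2_needle_hit_le nu_ge0 nu_sum1 k) _.
by rewrite -[leRHS]mulr1 ler_wpM2l // gerBl; exact: nu_ge0.
Qed.

Lemma dec_inner_uniform_mixture_ge p : is_pdist p ->
  64^-1 <= dec_inner (Mbar :: needles R N) Mbar eps p.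
Proof.
move=> pp; have [p_ge0 p_sum1] := pp.
set Q := \sum_j p (Some j).
have pNQ : p None + Q = 1 by rewrite -p_sum1 /Q big_option.
have [Q_ge|Q_lt] := lerP 16^-1 Q.
  have Mbar_in : List.In Mbar (Mbar :: needles R N) by left.
  have Mbar_feasible : Ep p (fun pi => hell2 (Mbar pi) (Mbar pi)) <= eps ^+ 2.
    by rewrite /Ep big1 ?sqr_ge0 // => pi _; rewrite hell2xx mulr0.
  apply: (le_trans _ (le_dec_inner Mbar_in Mbar_feasible)).
  by have := Ep_gM_uniform_mixture pp; rewrite -/Q; lra.
have [k _ k_min] := @arg_minP _ _ 'I_N (Ordinal N_gt0) xpredT (fun j => p (Some j)) isT.
have needle_in : List.In (needle R k) (Mbar :: needles R N).
  by right; apply/In_needles; exists k.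
have needle_feasible : Ep p (fun pi => hell2 (needle R k pi) (Mbar pi)) <= eps ^+ 2.
  apply: le_trans (Ep_hell2_needle_le k pp) _.
  have Nk : N%:R * p (Some k) <= Q.
    rewrite /Q; apply: le_trans (ler_sum _ (fun j _ => k_min j isT)).
    by rewrite sumr_const card_ord mulr_natl.
  have t_ge0 : 0 <= N%:R^-1 :> R by rewrite invr_ge0.
  have tN : N%:R^-1 * N%:R = 1 :> R by rewrite mulVf // pnatr_eq0 -lt0n.
  have pk_le : p (Some k) <= N%:R^-1 * Q.
    by have := ler_wpM2l t_ge0 Nk; rewrite mulrA tN mul1r.
  have t_le : N%:R^-1 / 4 <= eps ^+ 2.
    by have := ler_wpM2l t_ge0 Neps_ge; rewrite mulrA tN mul1r mulrC.
  by move: pk_le t_le; rewrite -/Q; nra.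
apply: le_trans _ (le_dec_inner needle_in needle_feasible).
by have := Ep_gM_needle_ge k pp; lra.
Qed.

Local Open Scope classical_set_scope.

Lemma dec_c_class_needles_ge : 64^-1 <= dec_c_class (needles R N) eps.
Proof.
set E := [set v | exists Mb, co (needles R N) Mb /\ v = dec_c (Mb :: needles R N) Mb eps].
have E_ub : has_ubound E.
  exists 1 => v [Mb [coMb ->]]; apply: (dec_c_le1 None) => M [<-|].
    exact: co_valid (@valid_needles R N) coMb.
  exact: valid_class_In (@valid_needles R N).
apply: le_trans (ub_le_sup E_ub _); last by exists Mbar; split; [exact: co_uniform_mixture|].
apply: (dec_c_ge (point_pdist_pdist R None)) => p pp.
exact: dec_inner_uniform_mixture_ge.
Qed.

End LowerBound.

Lemma needle_count (R : realType) (eps : R) : 0 < eps -> eps < 4^-1 ->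
  exists N : nat, [/\ (4 <= N)%N, 4^-1 <= N%:R * eps ^+ 2 & N%:R * eps ^+ 2 <= 2^-1].
Proof.
move=> eps_gt0 eps_lt.
have e2_gt0 : 0 < eps ^+ 2 by rewrite exprn_gt0.
have e2_lt : eps ^+ 2 < 16^-1 by rewrite expr2; nra.
set x := (2 * eps ^+ 2)^-1.
have xe2 : x * eps ^+ 2 = 2^-1 by rewrite /x invfM -mulrA mulVf ?mulr1 // gt_eqF.
have x_gt8 : 8 < x.
  by rewrite /x -[8]invrK ltf_pV2 ?posrE ?mulr_gt0 //; lra.
have x_ge0 : 0 <= x by rewrite invr_ge0 mulr_ge0 // ltW.
have /andP[N_le N_gt] := truncn_itv x_ge0.
exists (Num.truncn x); split.
- by rewrite -(ler_nat R); rewrite -natr1 in N_gt; lra.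
- rewrite -natr1 in N_gt.
  have := ler_wpM2r (ltW e2_gt0) (ltW N_gt); rewrite xe2 mulrDl mul1r; lra.
- by have := ler_wpM2r (ltW e2_gt0) N_le; rewrite xe2.
Qed.

Theorem proposition4p9 (R : realType) :
  exists c c' eps0 : R, 0 < c /\ 0 < c' /\ 0 < eps0 /\
    forall eps : R, 0 < eps -> eps < eps0 ->
      exists (Pi : finType) (O : eqType) (Ms : seq (model R Pi O)),
        valid_class Ms /\
        dec_c_co Ms eps <= c * eps /\
        c' * powR eps (2%:R / 3%:R) <= dec_c_class Ms eps.
Proof.
exists 1, 64^-1, 4^-1; split=> //; split; first by rewrite invr_gt0.
split=> [|eps eps_gt0 eps_lt]; first by rewrite invr_gt0.
have [N [N_ge4 Neps_ge Neps_le]] := needle_count eps_gt0 eps_lt.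
exists (option 'I_N), unit, (needles R N); split; first exact: valid_needles.
split; first by rewrite mul1r (le_trans (dec_c_co_needles_le0 N_ge4 Neps_le)) ?ltW.
have pow_le1 : powR eps (2%:R / 3%:R) <= 1.
  rewrite -[leRHS](powRr0 eps); apply: ger_powR; last by rewrite divr_ge0 ?ler0n.
  by rewrite eps_gt0 /=; lra.
apply: le_trans (dec_c_class_needles_ge N_ge4 Neps_ge).
by rewrite -[leRHS]mulr1 ler_pM2l ?invr_gt0.
Qed.
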